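(* Let $\Sigma$ be an alphabet and $R'\subseteq R\subseteq\Sigma^*\times\Sigma^*$. Let $P$ be a finite derivational proof in $\langle\Sigma\mid R'\rangle$. If $P\models R$ and the derivation graph $\Gamma_D(P)$ is acyclic, then there exists a sequence of exactly $|R\setminus R'|$ $\mathbf{Rel}(+)$ transformations between $\langle\Sigma\mid R'\rangle$ and $\langle\Sigma\mid R\rangle$.
   Context: For an alphabet $\Sigma$, $\Sigma^*$ is the free monoid of words. For $S\subseteq\Sigma^*\times\Sigma^*$, $\langle\Sigma\mid S\rangle$ is the quotient of $\Sigma^*$ by the congruence generated by $S$; for words $u,v$ and $(q,r)\in\Sigma^*\times\Sigma^*$ we write $u\xrightarrow{(q,r)}v$ if $u=sqt$ and $v=srt$ for some words $s,t$; $u\sim_Sv$ means $u$ is transformed into $v$ by finitely many steps $\xrightarrow{\rho}$ or their reverses with $\rho\in S$. A $\mathbf{Rel}(+)$ transformation passes from $\langle\Sigma\mid S\rangle$ to $\langle\Sigma\mid S\cup\{(q,r)\}\rangle$ where $q\sim_Sr$; a sequence of $m$ such transformations between two presentations is a chain of $m+1$ presentations from the first to the second, each obtained from the previous by one such transformation. Let $L(\Sigma)=\mathbb{N}\times(\Sigma^*\times\Sigma^* )$ (labels). A derivational proof in $\langle\Sigma\mid R'\rangle$ is a set $P\subseteq L(\Sigma)\times(L(\Sigma)\cup R')^*$ such that: (indexed) distinct elements of $P$ have distinct labels; (well-founded) for every $(\ell,d)\in P$ and every letter $d_k$ of $d$, either $d_k\in R'$, or $d_k\in L(\Sigma)$ and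 $(d_k,d')\in P$ for some $d'$; (valid) for every $(\ell,d)\in P$ with $\ell=(n,(w,w'))$ and $m=|d|$ there are words $v_1,\dots,v_{m+1}$ with $v_1=w$, $v_{m+1}=w'$ and, for each $k\le m$, $v_k\xrightarrow{d_k}v_{k+1}$ if $d_k\in R'$, and $v_k\xrightarrow{r}v_{k+1}$ if $d_k=(n',r)\in L(\Sigma)$. We write $P\models R$ if $R\subseteq R'\cup\{r\mid((n,r),d)\in P\}$. The derivation graph $\Gamma_D(P)$ has as vertices the labels $\ell$ with $(\ell,d)\in P$, and an edge $(\ell,\ell')$ whenever $\ell'$ occurs as a letter of $d$ for some $(\ell,d)\in P$. A directed graph is acyclic if it has no directed path of positive length from a vertex to itself. *)

From Stdlib Require Import List Relations.
Import ListNotations.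
Set Implicit Arguments.

Section Defs.
Variable Sigma : Type.

Definition word := list Sigma.
Definition wpair := (word * word)%type.
Definition relset := wpair -> Prop.

Definition subset (A B : relset) : Prop := forall x, A x -> B x.
Definition seteq (A B : relset) : Prop := forall x, A x <-> B x.

Definition step (rho : wpair) (u v : word) : Prop :=
  exists s t, u = s ++ fst rho ++ t /\ v = s ++ snd rho ++ t.

Definition conv (S : relset) : word -> word -> Prop :=
  clos_refl_sym_trans word (fun u v => exists rho, S rho /\ step rho u v).

Definition relplus (S T : relset) : Prop :=
  exists q r, conv S q r /\ seteq T (fun x => S x \/ x = (q, r)).

Fixpoint relplus_seq (m : nat) (S T : relset) : Prop :=
  match m with
  | 0 => seteq S T
  | Datatypes.S m' => exists U, relplus S U /\ relplus_seq m' U T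
  end.

Definition label := (nat * wpair)%type.
(* letters of words over L(Sigma) u R' *)
Definition letter := (label + wpair)%type.
Definition entry := (label * list letter)%type.

Definition rule_of (a : letter) : wpair :=
  match a with inl (_, r) => r | inr rho => rho end.

Fixpoint valid_chain (w : word) (d : list letter) (w' : word) : Prop :=
  match d with
  | [] => w = w'
  | a :: d' => exists v, step (rule_of a) w v /\ valid_chain v d' w'
  end.

Definition deriv_proof (R' : relset) (P : entry -> Prop) : Prop :=
  (forall x y, P x -> P y -> fst x = fst y -> x = y) /\
  (forall l d, P (l, d) -> forall a, In a d ->
     match a with
     | inr rho => R' rho
     | inl l' => exists d', P (l', d')
     end) /\
  (forall n w w' d, P ((n, (w, w')), d) -> valid_chain w d w').

Definition finite_proof (P : entry -> Prop) : Prop :=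
  exists l : list entry, forall x, P x <-> In x l.

Definition models (R' : relset) (P : entry -> Prop) (R : relset) : Prop :=
  forall rho, R rho -> R' rho \/ exists n d, P ((n, rho), d).

Definition dvertex (P : entry -> Prop) (l : label) : Prop := exists d, P (l, d).
Definition dedge (P : entry -> Prop) (l l' : label) : Prop :=
  exists d, P (l, d) /\ In (inl l') d.

Definition acyclic_dgraph (P : entry -> Prop) : Prop :=
  forall l, dvertex P l -> ~ clos_trans label (dedge P) l l.

End Defs.

From Stdlib Require Import List Relations Classical ListDec.
Import ListNotations.
Set Implicit Arguments.

(* Every proved relation [(w, w')] of an acyclic finite derivational proof
   already holds in [<Sigma | R'>]: a derivation is a chain of rewrites by
   rules of [R'] and by earlier proved relations, and acyclicity makes
   "earlier" well-founded.  Hence the relations of [R \ R'] can be added one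
   at a time, each by a single Rel(+) transformation. *)

Section Convertibility.
Variable Sigma : Type.
Implicit Types (S T : relset Sigma) (rho : wpair Sigma) (u v : word Sigma).

Definition conv_pair S rho : Prop := conv S (fst rho) (snd rho).

Lemma conv_rule S rho : S rho -> conv_pair S rho.
Proof.
  intros HS. apply rst_step. exists rho. split; [exact HS|].
  exists [], []. simpl. rewrite !app_nil_r. split; reflexivity.
Qed.

Lemma conv_mono S T u v : subset S T -> conv S u v -> conv T u v.
Proof.
  intros HST H. induction H as [u v [rho [HS Hstep]]| | |].
  - apply rst_step. exists rho. split; [apply HST|]; assumption.
  - apply rst_refl.
  - apply rst_sym; assumption.
  - eapply rst_trans; eassumption.
Qed.

Lemma conv_app_context S u v s t : conv S u v -> conv S (s ++ u ++ t) (s ++ v ++ t).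
Proof.
  intros H. induction H as [u v [rho [HS [s' [t' [-> ->]]]]]| | |].
  - apply rst_step. exists rho. split; [exact HS|].
    exists (s ++ s'), (t' ++ t). rewrite <- !app_assoc. split; reflexivity.
  - apply rst_refl.
  - apply rst_sym; assumption.
  - eapply rst_trans; eassumption.
Qed.

Lemma conv_of_step S rho u v : conv_pair S rho -> step rho u v -> conv S u v.
Proof. intros H [s [t [-> ->]]]. apply conv_app_context, H. Qed.

Lemma valid_chain_conv S d : forall u v,
  (forall a, In a d -> conv_pair S (rule_of a)) -> valid_chain u d v -> conv S u v.
Proof.
  induction d as [|a d IH]; simpl; intros u v Hd Hchain.
  - subst. apply rst_refl.
  - destruct Hchain as [u' [Hstep Hchain]].
    apply rst_trans with u'.
    + eapply conv_of_step; [apply Hd; left; reflexivity | exact Hstep].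
    + apply IH; [intros b Hb; apply Hd; right|]; assumption.
Qed.

End Convertibility.

Section RelPlusSequences.
Variable Sigma : Type.
Implicit Types (S T : relset Sigma).

Lemma relplus_seq_seteq m : forall S T T',
  relplus_seq m S T -> seteq T T' -> relplus_seq m S T'.
Proof.
  induction m as [|m IH]; simpl; intros S T T' H HT.
  - intros x. rewrite (H x). apply HT.
  - destruct H as [U [HSU HUT]]. exists U. split; [|eapply IH]; eassumption.
Qed.

Lemma relplus_seq_extend (l : list (wpair Sigma)) : forall S,
  (forall rho, In rho l -> conv_pair S rho) ->
  relplus_seq (length l) S (fun x => S x \/ In x l).
Proof.
  induction l as [|rho l IH]; simpl; intros S Hl.
  - intros x. tauto.
  - exists (fun x => S x \/ x = rho). split.
    + exists (fst rho), (snd rho). split.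
      * apply Hl. left. reflexivity.
      * intros x. destruct rho. reflexivity.
    + eapply relplus_seq_seteq.
      * apply IH. intros rho' Hrho'. eapply conv_mono; [|apply Hl; right; exact Hrho'].
        intros x Hx. left. exact Hx.
      * intros x. simpl. intuition.
Qed.

End RelPlusSequences.

Section FiniteAcyclicInduction.
Variables (A : Type) (vertex : A -> Prop) (edge : A -> A -> Prop) (V : list A).
Hypothesis vertex_finite : forall x, vertex x -> In x V.
Hypothesis edge_closed : forall x y, vertex x -> edge x y -> vertex y.
Hypothesis acyclic : forall x, vertex x -> ~ clos_trans A edge x x.

Fixpoint walk (x : A) (p : list A) : Prop :=
  match p with
  | [] => True
  | y :: p' => edge x y /\ walk y p'
  end.

Lemma walk_app x p y q : walk x (p ++ y :: q) -> clos_trans A edge x y /\ walk y q.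
Proof.
  revert x. induction p as [|z p IH]; simpl; intros x [Hxz Hwalk].
  - split; [apply t_step|]; assumption.
  - destruct (IH z Hwalk) as [Hzy Hq]. split; [|exact Hq].
    apply t_trans with z; [apply t_step|]; assumption.
Qed.

Lemma walk_vertices x p : vertex x -> walk x p -> forall y, In y p -> vertex y.
Proof.
  revert x. induction p as [|z p IH]; simpl; [contradiction|].
  intros x Hx [Hxz Hwalk] y Hy.
  assert (Hz : vertex z) by (eapply edge_closed; eassumption).
  destruct Hy as [<-|Hy]; [exact Hz | exact (IH z Hz Hwalk y Hy)].
Qed.

(* Pigeonhole: a longer walk repeats a vertex, and the segment between the
   two visits is a cycle. *)
Lemma walk_bounded x p : vertex x -> walk x p -> length p <= length V.
Proof.
  intros Hx Hwalk.
  destruct (classic (NoDup p)) as [Hnodup|Hdup].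
  - apply NoDup_incl_length; [exact Hnodup|].
    intros y Hy. apply vertex_finite. exact (walk_vertices p Hx Hwalk y Hy).
  - exfalso.
    destruct (not_NoDup (fun y z => classic (y = z)) Hdup) as [y [p1 [p2 [p3 ->]]]].
    destruct (walk_app _ _ _ _ Hwalk) as [_ Hcycle].
    destruct (walk_app _ _ _ _ Hcycle) as [Hyy _].
    eapply acyclic; [|exact Hyy].
    apply (walk_vertices _ Hx Hwalk). apply in_or_app. right. left. reflexivity.
Qed.

Lemma finite_acyclic_ind (Q : A -> Prop) :
  (forall x, vertex x -> (forall y, edge x y -> Q y) -> Q x) ->
  forall x, vertex x -> Q x.
Proof.
  intros HQ x Hx. apply NNPP. intros HnQ.
  assert (Hwalks : forall k x, vertex x -> ~ Q x -> exists p, length p = k /\ walk x p).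
  { induction k as [|k IH]; intros z Hz HnQz.
    - exists []. split; [reflexivity | exact I].
    - destruct (not_all_ex_not _ _ (fun H => HnQz (HQ z Hz H))) as [y Hy].
      apply imply_to_and in Hy as [Hzy HnQy].
      destruct (IH y (edge_closed Hz Hzy) HnQy) as [p [Hlen Hwalk]].
      exists (y :: p). simpl. split; [congruence | split; assumption]. }
  destruct (Hwalks (S (length V)) x Hx HnQ) as [p [Hlen Hwalk]].
  pose proof (walk_bounded p Hx Hwalk) as Hbound.
  rewrite Hlen in Hbound. exact (PeanoNat.Nat.nle_succ_diag_l _ Hbound).
Qed.

End FiniteAcyclicInduction.

Section Soundness.
Variables (Sigma : Type) (R' : relset Sigma) (P : entry Sigma -> Prop).
Hypothesis P_proof : deriv_proof R' P.

Lemma dedge_dvertex l l' : dedge P l l' -> dvertex P l'.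
Proof.
  destruct P_proof as [_ [Hwf _]]. intros [d [Hl Hin]]. exact (Hwf _ _ Hl _ Hin).
Qed.

Lemma entry_conv l d :
  P (l, d) -> (forall l', dedge P l l' -> conv_pair R' (snd l')) -> conv_pair R' (snd l).
Proof.
  destruct P_proof as [_ [Hwf Hvalid]]. intros Hl Hsucc.
  destruct l as [n [w w']].
  apply valid_chain_conv with d; [|exact (Hvalid _ _ _ _ Hl)].
  intros [l'|rho] Hin; simpl.
  - apply Hsucc. exists d. split; assumption.
  - apply conv_rule. exact (Hwf _ _ Hl _ Hin).
Qed.

Theorem acyclic_proof_sound :
  finite_proof P -> acyclic_dgraph P -> forall l d, P (l, d) -> conv_pair R' (snd l).
Proof.
  intros [E HE] Hacyclic l d Hl.
  apply (finite_acyclic_ind (dvertex P) (edge := dedge P) (map fst E))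
    with (Q := fun l => conv_pair R' (snd l)) (x := l).
  - intros l' [d' Hl']. apply (in_map fst _ (l', d')), HE, Hl'.
  - intros l1 l2 _. apply dedge_dvertex.
  - exact Hacyclic.
  - intros l' [d' Hl'] Hsucc. exact (entry_conv Hl' Hsucc).
  - exists d. exact Hl.
Qed.

End Soundness.

Lemma enumerate_finite_pred (B : Type) (Q : B -> Prop) (C : list B) :
  (forall x, Q x -> In x C) -> exists l, NoDup l /\ forall x, Q x <-> In x l.
Proof.
  intros HQC.
  enough (Henum : exists l, NoDup l /\ forall x, Q x /\ In x C <-> In x l).
  { destruct Henum as [l [Hnodup Hl]]. exists l. split; [exact Hnodup|].
    intros x. rewrite <- Hl. split; [split; [|apply HQC]|]; tauto. }
  clear HQC. induction C as [|c C [l [Hnodup Hl]]].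
  - exists []. split; [constructor | simpl; tauto].
  - destruct (classic (Q c /\ ~ In c l)) as [[Hc Hcl]|Hc].
    + exists (c :: l). split; [constructor; assumption|].
      intros x. simpl. rewrite <- Hl. split; [|intros [<-|]]; intuition.
    + exists l. split; [exact Hnodup|].
      intros x. simpl. rewrite <- Hl.
      split; [|tauto]. intros [HQx [<-|HxC]]; [|tauto].
      apply NNPP. intros Hx. apply Hc. split; [|rewrite <- Hl]; tauto.
Qed.

Theorem theorem9 (Sigma : Type) (R' R : relset Sigma) (P : entry Sigma -> Prop) :
  subset R' R ->
  deriv_proof R' P ->
  finite_proof P ->
  models R' P R ->
  acyclic_dgraph P ->
  (* l enumerates R \ R' without repetition, so |R \ R'| = length l *)
  exists l : list (wpair Sigma),
    NoDup l /\ (forall x, (R x /\ ~ R' x) <-> In x l) /\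
    relplus_seq (length l) R' R.
Proof.
  intros HR'R HP Hfinite Hmodels Hacyclic.
  assert (Hproved : forall rho, R rho -> ~ R' rho -> exists l d, P (l, d) /\ snd l = rho).
  { intros rho HR HnR'. destruct (Hmodels rho HR) as [|[n [d Hd]]]; [contradiction|].
    exists (n, rho), d. split; [exact Hd | reflexivity]. }
  pose proof Hfinite as [E HE].
  destruct (@enumerate_finite_pred _ (fun rho => R rho /\ ~ R' rho)
              (map (fun e => snd (fst e)) E)) as [l [Hnodup Hl]].
  { intros rho [HR HnR']. destruct (Hproved rho HR HnR') as [l [d [Hld <-]]].
    apply (in_map (fun e => snd (fst e)) _ (l, d)), HE, Hld. }
  exists l. split; [exact Hnodup|]. split; [exact Hl|].
  apply relplus_seq_seteq with (fun x => R' x \/ In x l).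
  - apply relplus_seq_extend. intros rho Hrho.
    apply Hl in Hrho as [HR HnR']. destruct (Hproved rho HR HnR') as [l' [d [Hl'd <-]]].
    exact (acyclic_proof_sound HP Hfinite Hacyclic _ _ Hl'd).
  - intros x. rewrite <- Hl. destruct (classic (R' x)); intuition.
Qed.
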